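(* Let $\langle A, \leq, \otimes, \ominus, \mathbf{1}\rangle$ be a residuated partially ordered monoid with bottom element $\bot$. Let $Lex_\omega(A) = I(A)^\omega \cup I(A)^\ast A \{\bot\}^\omega$, with componentwise operation $\otimes^\omega$, identity $\mathbf{1}^\omega$, and order $a \leq_\omega b$ iff $a_{\leq k} \leq_k b_{\leq k}$ for all $k\geq1$. Then $\langle Lex_\omega(A), \leq_\omega, \otimes^\omega, \ominus_\omega, \mathbf{1}^\omega\rangle$ is a residuated partially ordered monoid, where for $a,b\in Lex_\omega(A)$: $$a \ominus_\omega b = \begin{cases} (a_1 \ominus b_1) \ldots (a_k \ominus b_k) \ldots & \text{if } \infty = \gamma(a,b) = \delta(a,b),\\ (a_1 \ominus b_1) \ldots (a_{\gamma(a,b)} \ominus b_{\gamma(a,b)})\,\bot^\omega & \text{if } \infty \neq \gamma(a,b) \leq \delta(a,b),\\ (a_1 \ominus b_1) \ldots (a_{\delta(a,b)} \ominus b_{\delta(a,b)})\,\big(\bigvee Lex_\omega(A)\big) & \text{otherwise.}\end{cases}$$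
   Context: A residuated partially ordered monoid $\langle A, \leq, \otimes, \ominus, \mathbf{1}\rangle$ consists of a partial order $\langle A,\leq\rangle$, a commutative monoid $\langle A,\otimes,\mathbf{1}\rangle$, and a binary operation $\ominus$ with $b \otimes c \leq a$ iff $c \leq a \ominus b$ for all $a,b,c\in A$. $a<b$ means $a\leq b$, $a\neq b$. $I(A) = \{c \in A \mid \forall a,b \in A.\ a \otimes c = b \otimes c \Rightarrow a = b\}$, $C(A)=A\setminus I(A)$. $I(A)^\omega$: infinite sequences over $I(A)$; $I(A)^\ast A\{\bot\}^\omega$: infinite sequences consisting of a finite (possibly empty) sequence over $I(A)$, then one element of $A$, then infinitely many $\bot$. $a_{\leq k}$ is the length-$k$ prefix $a_1\ldots a_k$. The order $\leq_k$ on $A^k$: $\leq_1=\leq$, and for $k\geq2$, $a_1 \ldots a_k \leq_k b_1 \ldots b_k$ iff $a_1 < b_1$, or $a_1 = b_1$ and $a_2 \ldots a_k \leq_{k-1} b_2 \ldots b_k$. $\bot^\omega$ is the constant sequence $\bot\bot\ldots$; $\bigvee Lex_\omega(A)$ is the greatest element of $Lex_\omega(A)$ w.r.t. $\leq_\omega$; in the third case the result is the finite prefix followed by that infinite sequence. For $a,b\in Lex_\omega(A)$: $\gamma(a,b) = \min\{ i \mid a_i \ominus b_i \in C(A)\}$ and $\delta(a,b) = \min\{ i \mid (a_i \ominus b_i) \otimes b_i < a_i\}$, each equal to $\infty$ if the set is empty. *)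

(* Sequences over A are functions nat -> A, indexed from 0
   (the paper's a_1 a_2 ... is our a 0, a 1, ...). *)
From Stdlib Require Import Arith Lia ClassicalEpsilon.

Definition residuated_pomonoid_on {T : Type} (S : T -> Prop)
  (le : T -> T -> Prop) (mul : T -> T -> T) (res : T -> T -> T) (one : T) : Prop :=
  S one
  /\ (forall x y, S x -> S y -> S (mul x y))
  /\ (forall x y, S x -> S y -> S (res x y))
  /\ (forall x, S x -> le x x)
  /\ (forall x y, S x -> S y -> le x y -> le y x -> x = y)
  /\ (forall x y z, S x -> S y -> S z -> le x y -> le y z -> le x z)
  /\ (forall x y z, S x -> S y -> S z -> mul x (mul y z) = mul (mul x y) z)
  /\ (forall x y, S x -> S y -> mul x y = mul y x)
  /\ (forall x, S x -> mul one x = x)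
  /\ (forall a b c, S a -> S b -> S c -> (le (mul b c) a <-> le c (res a b))).

Definition residuated_pomonoid {T : Type}
  (le : T -> T -> Prop) (mul : T -> T -> T) (res : T -> T -> T) (one : T) : Prop :=
  residuated_pomonoid_on (fun _ => True) le mul res one.

Definition strict {T : Type} (le : T -> T -> Prop) (x y : T) : Prop :=
  le x y /\ x <> y.

(* I(A): cancellative elements *)
Definition cancellative {A : Type} (mul : A -> A -> A) (c : A) : Prop :=
  forall a b, mul a c = mul b c -> a = b.

(* Lex_omega(A) = I(A)^omega  U  I(A)^* A {bot}^omega *)
Definition in_Lex {A : Type} (mul : A -> A -> A) (bot : A) (a : nat -> A) : Prop :=
  (forall i, cancellative mul (a i))
  \/ exists k, (forall i, i < k -> cancellative mul (a i))
               /\ (forall i, k < i -> a i = bot).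

(* lexS n a b  <->  a_{<= n+1} <=_{n+1} b_{<= n+1} *)
Fixpoint lexS {A : Type} (le : A -> A -> Prop) (n : nat) (a b : nat -> A) : Prop :=
  match n with
  | 0 => le (a 0) (b 0)
  | S n' => strict le (a 0) (b 0)
            \/ (a 0 = b 0 /\ lexS le n' (fun i => a (S i)) (fun i => b (S i)))
  end.

Definition le_omega {A : Type} (le : A -> A -> Prop) (a b : nat -> A) : Prop :=
  forall n, lexS le n a b.

Definition mul_omega {A : Type} (mul : A -> A -> A) (a b : nat -> A) : nat -> A :=
  fun i => mul (a i) (b i).

Definition one_omega {A : Type} (one : A) : nat -> A := fun _ => one.

(* least index satisfying P, None standing for infinity *)
Definition least (P : nat -> Prop) : option nat :=
  match excluded_middle_informative (exists n, P n) with
  | left _ => Some (epsilon (inhabits 0) (fun n => P n /\ forall m, P m -> n <= m))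
  | right _ => None
  end.

Definition gamma {A : Type} (mul res : A -> A -> A) (a b : nat -> A) : option nat :=
  least (fun i => ~ cancellative mul (res (a i) (b i))).

Definition delta {A : Type} (le : A -> A -> Prop) (mul res : A -> A -> A)
  (a b : nat -> A) : option nat :=
  least (fun i => strict le (mul (res (a i) (b i)) (b i)) (a i)).

Definition is_greatest_Lex {A : Type} (le : A -> A -> Prop) (mul : A -> A -> A)
  (bot : A) (t : nat -> A) : Prop :=
  in_Lex mul bot t /\ forall a, in_Lex mul bot a -> le_omega le a t.

Definition top_Lex {A : Type} (le : A -> A -> Prop) (mul : A -> A -> A) (bot : A)
  : nat -> A :=
  epsilon (inhabits (fun _ => bot)) (is_greatest_Lex le mul bot).

Definition res_omega {A : Type} (le : A -> A -> Prop) (mul res : A -> A -> A)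
  (bot : A) (a b : nat -> A) : nat -> A :=
  match gamma mul res a b, delta le mul res a b with
  | None, None => fun i => res (a i) (b i)
  | Some g, None => fun i => if i <=? g then res (a i) (b i) else bot
  | Some g, Some d =>
      if g <=? d then (fun i => if i <=? g then res (a i) (b i) else bot)
      else (fun i => if i <=? d then res (a i) (b i)
                     else top_Lex le mul bot (i - S d))
  | None, Some d =>
      fun i => if i <=? d then res (a i) (b i) else top_Lex le mul bot (i - S d)
  end.

From Stdlib Require Import Arith Lia Classical ClassicalEpsilon FunctionalExtensionality Wf_nat.

(* [<=_omega] is the lexicographic order on sequences, so [b (x) c <=_omega a] and
   [c <=_omega a (-)_omega b] are both decided at a first index of disagreement, where
   residuation in [A] compares them.  Before the cut index, [a (-)_omega b] is the
   pointwise residual [r_i = a_i (-) b_i] and [b_i (x) r_i = a_i]: [c_i = r_i] passes the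
   comparison on, while [c_i < r_i] gives [b_i (x) c_i < a_i] if [b_i] is cancellative,
   and otherwise [b] is [bot] from there on.  At [delta] the residual is inexact, so
   [b (x) c < a] whatever the tail of [c], and the greatest tail is taken.  At [gamma] it
   is not cancellative, so any [c] in [Lex_omega(A)] agreeing with it there is [bot]
   afterwards; cutting there is also what keeps [a (-)_omega b] inside [Lex_omega(A)]. *)

Lemma exists_least (P : nat -> Prop) :
  (exists n, P n) -> exists n, P n /\ forall m, P m -> n <= m.
Proof.
  intros Hex.
  destruct (dec_inh_nat_subset_has_unique_least_element P (fun n => classic (P n)) Hex)
    as [n [Hn _]].
  now exists n.
Qed.

Lemma least_Some (P : nat -> Prop) n : least P = Some n -> P n /\ forall m, m < n -> ~ P m.
Proof.
  unfold least. destruct excluded_middle_informative as [HP|]; [|discriminate].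
  intros [= <-].
  destruct (epsilon_spec (inhabits 0) _ (exists_least P HP)) as [Hn Hmin].
  split; [exact Hn|]. intros m Hm HPm. specialize (Hmin m HPm). lia.
Qed.

Lemma least_None (P : nat -> Prop) : least P = None -> forall n, ~ P n.
Proof.
  unfold least. destruct excluded_middle_informative as [|HnP]; [discriminate|].
  intros _ n Hn. apply HnP. now exists n.
Qed.

Section LexOmega.

Set Implicit Arguments.

Variables (A : Type) (le : A -> A -> Prop) (mul res : A -> A -> A) (one bot : A).

Definition agree_below (j : nat) (a b : nat -> A) : Prop := forall i, i < j -> a i = b i.

Definition lex (a b : nat -> A) : Prop :=
  a = b \/ exists j, agree_below j a b /\ strict le (a j) (b j).

Lemma agree_below_le m n a b : m <= n -> agree_below n a b -> agree_below m a b.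
Proof. intros Hmn Hn i Hi. apply Hn. lia. Qed.

Lemma lexS_iff n : forall a b, lexS le n a b <->
  (exists j, j < n /\ agree_below j a b /\ strict le (a j) (b j))
  \/ (agree_below n a b /\ le (a n) (b n)).
Proof.
  induction n as [|n IH]; intros a b; cbn [lexS].
  - split.
    + intros H. right. split; [intros i Hi; lia|exact H].
    + intros [[j [Hj _]]|[_ H]]; [lia|exact H].
  - rewrite IH. split.
    + intros [Hs|[H0 [[j [Hj [Hagree Hs]]]|[Hagree Hle]]]].
      * left. exists 0. split; [lia|]. split; [intros i Hi; lia|exact Hs].
      * left. exists (S j). split; [lia|]. split; [|exact Hs].
        intros [|i] Hi; [exact H0|apply Hagree; lia].
      * right. split; [|exact Hle]. intros [|i] Hi; [exact H0|apply Hagree; lia].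
    + intros [[[|j] [Hj [Hagree Hs]]]|[Hagree Hle]]; [now left| |]; right;
        (split; [apply Hagree; lia|]).
      * left. exists j. split; [lia|]. split; [intros i Hi; apply Hagree; lia|exact Hs].
      * right. split; [intros i Hi; apply Hagree; lia|exact Hle].
Qed.

Lemma first_diff (a b : nat -> A) : a <> b -> exists m, agree_below m a b /\ a m <> b m.
Proof.
  intros Hab.
  assert (Hex : exists m, a m <> b m).
  { apply not_all_ex_not. intros Heq. apply Hab. now apply functional_extensionality. }
  destruct (exists_least _ Hex) as [m [Hm Hmin]].
  exists m. split; [|exact Hm].
  intros i Hi. apply NNPP. intros Hne. specialize (Hmin i Hne). lia.
Qed.

Lemma lex_of_first_diff a b :
  (forall m, agree_below m a b -> a m <> b m -> le (a m) (b m)) -> lex a b.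
Proof.
  intros H. destruct (classic (a = b)) as [|Hab]; [now left|].
  destruct (first_diff Hab) as [m [Hm Hne]].
  right. exists m. split; [exact Hm|]. split; [now apply H|exact Hne].
Qed.

Hypothesis le_reflexive : forall x, le x x.

Lemma lex_le_at_first_diff a b m : lex a b -> agree_below m a b -> le (a m) (b m).
Proof.
  intros [<-|[j [Hj [Hle Hne]]]] Hm; [apply le_reflexive|].
  destruct (lt_eq_lt_dec j m) as [[H|<-]|H].
  - exfalso. now apply Hne, Hm.
  - exact Hle.
  - rewrite Hj by exact H. apply le_reflexive.
Qed.

Lemma le_omega_lex a b : le_omega le a b <-> lex a b.
Proof.
  split.
  - intros H. apply lex_of_first_diff. intros m Hm Hne.
    destruct (proj1 (lexS_iff m a b) (H m)) as [[j [Hj [_ [_ Hj_ne]]]]|[_ Hle]].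
    + exfalso. now apply Hj_ne, Hm.
    + exact Hle.
  - intros Hlex n. apply lexS_iff.
    assert (Hn : agree_below n a b
                 \/ exists j, j < n /\ agree_below j a b /\ strict le (a j) (b j)).
    { destruct Hlex as [<-|[j [Hj Hs]]]; [now left|].
      destruct (Nat.lt_ge_cases j n); [right; now exists j|].
      left. now apply agree_below_le with j. }
    destruct Hn as [Hn|]; [right|now left].
    split; [exact Hn|]. now apply lex_le_at_first_diff.
Qed.

Hypothesis le_antisymmetric : forall x y, le x y -> le y x -> x = y.

Lemma lex_antisym a b : lex a b -> lex b a -> a = b.
Proof.
  intros Hab Hba. apply NNPP. intros Hne.
  destruct (first_diff Hne) as [m [Hm Hm_ne]].
  apply Hm_ne, le_antisymmetric; apply lex_le_at_first_diff; auto.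
  intros i Hi. symmetry. now apply Hm.
Qed.

Hypothesis le_transitive : forall x y z, le x y -> le y z -> le x z.

Lemma lex_trans a b c : lex a b -> lex b c -> lex a c.
Proof.
  intros [<-|[j1 [A1 [L1 N1]]]] [<-|[j2 [A2 [L2 N2]]]];
    [now left|right; now exists j2|right; now exists j1|right].
  destruct (lt_eq_lt_dec j1 j2) as [[H|<-]|H].
  - exists j1. split; [intros i Hi; rewrite A1 by exact Hi; apply A2; lia|].
    rewrite <- (A2 j1 H). now split.
  - exists j1. split; [intros i Hi; rewrite A1 by exact Hi; now apply A2|].
    split; [eauto|]. intros E. rewrite E in L1. now apply N2, le_antisymmetric.
  - exists j2. split; [intros i Hi; rewrite A1 by lia; now apply A2|].
    rewrite (A1 j2 H). now split.
Qed.

Hypothesis mul_assoc : forall x y z, mul x (mul y z) = mul (mul x y) z.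
Hypothesis mul_comm : forall x y, mul x y = mul y x.
Hypothesis mul_1_l : forall x, mul one x = x.
Hypothesis residuation : forall a b c, le (mul b c) a <-> le c (res a b).
Hypothesis bot_least : forall x, le bot x.

Local Notation canc := (cancellative mul).
Local Notation Lex := (in_Lex mul bot).
Local Notation top := (top_Lex le mul bot).

Lemma mul_res_le a b : le (mul b (res a b)) a.
Proof. apply residuation, le_reflexive. Qed.

Lemma mul_le_mono_l b x y : le x y -> le (mul b x) (mul b y).
Proof.
  intros Hxy. apply residuation, le_transitive with y; [exact Hxy|].
  apply residuation, le_reflexive.
Qed.

Lemma mul_bot_r x : mul x bot = bot.
Proof. apply le_antisymmetric; [|apply bot_least]. apply residuation, bot_least. Qed.

Lemma mul_bot_l x : mul bot x = bot.
Proof. rewrite mul_comm. apply mul_bot_r. Qed.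

Lemma canc_one : canc one.
Proof. intros u v E. now rewrite (mul_comm u), (mul_comm v), !mul_1_l in E. Qed.

Lemma canc_mul x y : canc x -> canc y -> canc (mul x y).
Proof. intros Hx Hy u v E. apply Hx, Hy. now rewrite <- !mul_assoc. Qed.

Lemma mul_ne_of_canc x y z w : canc x -> le (mul x z) w -> strict le y z -> mul x y <> w.
Proof.
  intros Hx Hzw [Hyz Hne] E. apply Hne, Hx. rewrite !(mul_comm _ x).
  apply le_antisymmetric; [now apply mul_le_mono_l|now rewrite E].
Qed.

Lemma lex_bot_after x y j :
  agree_below j x y -> le (x j) (y j) -> (forall i, j < i -> x i = bot) -> lex x y.
Proof.
  intros Hagree Hj Hbot. apply lex_of_first_diff. intros m _ Hne.
  destruct (lt_eq_lt_dec m j) as [[H|<-]|H].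
  - exfalso. now apply Hne, Hagree.
  - exact Hj.
  - rewrite Hbot by exact H. apply bot_least.
Qed.

Lemma in_Lex_iff a : Lex a <-> forall j, ~ canc (a j) -> forall i, j < i -> a i = bot.
Proof.
  split.
  - intros [Hall|[k [Hcanc Hbot]]] j Hj i Hi; [now exfalso; apply Hj|].
    apply Hbot. destruct (Nat.lt_ge_cases j k) as [H|H]; [now exfalso; apply Hj, Hcanc|lia].
  - intros H. destruct (classic (exists j, ~ canc (a j))) as [Hex|Hall].
    + destruct (exists_least _ Hex) as [k [Hk Hmin]].
      right. exists k. split; [|now apply H].
      intros i Hi. apply NNPP. intros Hi_canc. specialize (Hmin i Hi_canc). lia.
    + left. intros i. apply NNPP. intros Hi. apply Hall. now exists i.
Qed.

Lemma Lex_mul a b : Lex a -> Lex b -> Lex (mul_omega mul a b).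
Proof.
  rewrite !in_Lex_iff. unfold mul_omega. intros Ha Hb j Hj i Hi.
  destruct (classic (canc (a j))) as [Haj|Haj].
  - destruct (classic (canc (b j))) as [Hbj|Hbj].
    + exfalso. now apply Hj, canc_mul.
    + rewrite (Hb j Hbj i Hi). apply mul_bot_r.
  - rewrite (Ha j Haj i Hi). apply mul_bot_l.
Qed.

Lemma Lex_shift a k : Lex a -> Lex (fun i => a (i + k)).
Proof. rewrite !in_Lex_iff. intros Ha j Hj i Hi. apply (Ha (j + k)); [exact Hj|lia]. Qed.

Lemma top_Lex_greatest : is_greatest_Lex le mul bot top.
Proof.
  unfold top_Lex. apply epsilon_spec.
  set (t := res bot bot).
  assert (Ht : forall x, le x t).
  { intros x. apply residuation. rewrite mul_bot_l. apply le_reflexive. }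
  destruct (classic (canc t)) as [Hc|Hc].
  - exists (fun _ => t). split; [now left|].
    intros a _. apply le_omega_lex, lex_of_first_diff. auto.
  - exists (fun i => match i with 0 => t | S _ => bot end). split.
    + apply in_Lex_iff. intros j _ [|i] Hi; [lia|reflexivity].
    + intros a Ha. apply le_omega_lex, lex_of_first_diff. intros [|m] Hm _; [apply Ht|].
      rewrite (proj1 (in_Lex_iff a) Ha 0); [apply bot_least| |lia].
      rewrite (Hm 0); [exact Hc|lia].
Qed.

Definition res_seq (a b : nat -> A) : nat -> A := fun i => res (a i) (b i).

(* The three cases of [res_omega a b]; [g] is [gamma a b] and [d] is [delta a b]. *)
Inductive res_omega_spec (a b r : nat -> A) : Prop :=
  | ResFull :
      r = res_seq a b -> (forall i, canc (r i)) -> mul_omega mul b r = a ->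
      res_omega_spec a b r
  | ResCutBot g :
      agree_below (S g) r (res_seq a b) -> (forall i, g < i -> r i = bot) ->
      (forall i, i < g -> canc (r i)) -> ~ canc (r g) ->
      agree_below g (mul_omega mul b r) a -> res_omega_spec a b r
  | ResCutTop d :
      agree_below (S d) r (res_seq a b) -> (forall i, r (i + S d) = top i) ->
      (forall i, i <= d -> canc (r i)) ->
      agree_below d (mul_omega mul b r) a -> mul (b d) (r d) <> a d ->
      res_omega_spec a b r.

Lemma res_omega_spec_cut_bot a b g :
  ~ canc (res (a g) (b g)) -> (forall i, i < g -> canc (res (a i) (b i))) ->
  agree_below g (mul_omega mul b (res_seq a b)) a ->
  res_omega_spec a b (fun i => if i <=? g then res (a i) (b i) else bot).
Proof.
  intros Hg Hcanc Hexact. apply ResCutBot with g.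
  - intros i Hi. destruct (Nat.leb_spec i g); [reflexivity|lia].
  - intros i Hi. destruct (Nat.leb_spec i g); [lia|reflexivity].
  - intros i Hi. destruct (Nat.leb_spec i g); [now apply Hcanc|lia].
  - now rewrite Nat.leb_refl.
  - intros i Hi. unfold mul_omega. destruct (Nat.leb_spec i g); [now apply Hexact|lia].
Qed.

Lemma res_omega_spec_cut_top a b d :
  (forall i, i <= d -> canc (res (a i) (b i))) ->
  agree_below d (mul_omega mul b (res_seq a b)) a -> mul (b d) (res (a d) (b d)) <> a d ->
  res_omega_spec a b (fun i => if i <=? d then res (a i) (b i) else top (i - S d)).
Proof.
  intros Hcanc Hexact Hd. apply ResCutTop with d.
  - intros i Hi. destruct (Nat.leb_spec i d); [reflexivity|lia].
  - intros i. destruct (Nat.leb_spec (i + S d) d); [lia|]. now rewrite Nat.add_sub.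
  - intros i Hi. destruct (Nat.leb_spec i d); [now apply Hcanc|lia].
  - intros i Hi. unfold mul_omega. destruct (Nat.leb_spec i d); [now apply Hexact|lia].
  - now rewrite Nat.leb_refl.
Qed.

Lemma exact_of_not_strict (a b : nat -> A) i :
  ~ strict le (mul (res (a i) (b i)) (b i)) (a i) -> mul (b i) (res (a i) (b i)) = a i.
Proof.
  intros Hns. apply NNPP. intros Hne. apply Hns. rewrite mul_comm.
  split; [apply mul_res_le|exact Hne].
Qed.

Lemma res_omegaP a b : res_omega_spec a b (res_omega le mul res bot a b).
Proof.
  unfold res_omega, gamma, delta.
  destruct (least (fun i => ~ canc (res (a i) (b i)))) as [g|] eqn:Eg;
    [apply least_Some in Eg as [Hg Hg_min]|pose proof (least_None _ Eg) as Hg_none];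
  (destruct (least (fun i => strict le (mul (res (a i) (b i)) (b i)) (a i))) as [d|] eqn:Ed;
    [apply least_Some in Ed as [Hd Hd_min]|pose proof (least_None _ Ed) as Hd_none]).
  - destruct (Nat.leb_spec g d).
    + apply res_omega_spec_cut_bot; [exact Hg|intros i Hi; now apply NNPP, Hg_min|].
      intros i Hi. apply exact_of_not_strict, Hd_min. lia.
    + apply res_omega_spec_cut_top; [intros i Hi; apply NNPP, Hg_min; lia| |].
      * intros i Hi. now apply exact_of_not_strict, Hd_min.
      * rewrite mul_comm. exact (proj2 Hd).
  - apply res_omega_spec_cut_bot; [exact Hg|intros i Hi; now apply NNPP, Hg_min|].
    intros i _. now apply exact_of_not_strict.
  - apply res_omega_spec_cut_top; [intros i _; now apply NNPP| |].
    + intros i Hi. now apply exact_of_not_strict, Hd_min.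
    + rewrite mul_comm. exact (proj2 Hd).
  - apply ResFull; [reflexivity|intros i; now apply NNPP|].
    apply functional_extensionality. intros i. now apply exact_of_not_strict.
Qed.

Lemma Lex_of_res_omega_spec a b r : res_omega_spec a b r -> Lex r.
Proof.
  intros Hr. apply in_Lex_iff. intros j Hj i Hi.
  destruct Hr as [_ Hcanc _|g _ Hbot Hcanc _ _|d _ Htop Hcanc _ _].
  - exfalso. now apply Hj.
  - apply Hbot. destruct (Nat.lt_ge_cases j g) as [H|H]; [now exfalso; apply Hj, Hcanc|lia].
  - destruct (Nat.le_gt_cases j d) as [H|H]; [now exfalso; apply Hj, Hcanc|].
    replace i with (i - S d + S d) by lia. rewrite Htop.
    apply (proj1 (in_Lex_iff top) (proj1 top_Lex_greatest) (j - S d)); [|lia].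
    rewrite <- Htop. now replace (j - S d + S d) with j by lia.
Qed.

Lemma agree_below_mul_omega a b c r m :
  agree_below m c r -> agree_below m (mul_omega mul b r) a ->
  agree_below m (mul_omega mul b c) a.
Proof. intros Hc Hr i Hi. unfold mul_omega. rewrite Hc by exact Hi. exact (Hr i Hi). Qed.

Lemma le_res_of_mul_lex a b c r m :
  lex (mul_omega mul b c) a -> agree_below m c r -> agree_below m (mul_omega mul b r) a ->
  le (c m) (res (a m) (b m)).
Proof.
  intros Hlex Hc Hr. apply residuation.
  exact (lex_le_at_first_diff Hlex (agree_below_mul_omega Hc Hr)).
Qed.

Lemma mul_lex_at a b c j :
  Lex b -> agree_below j (mul_omega mul b c) a -> le (mul (b j) (c j)) (a j) ->
  (canc (b j) -> mul (b j) (c j) <> a j) -> lex (mul_omega mul b c) a.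
Proof.
  intros Hb Hagree Hle Hne. destruct (classic (canc (b j))) as [Hbj|Hbj].
  - right. exists j. split; [exact Hagree|]. split; [exact Hle|now apply Hne].
  - apply lex_bot_after with j; [exact Hagree|exact Hle|].
    intros i Hi. unfold mul_omega.
    rewrite (proj1 (in_Lex_iff b) Hb j Hbj i Hi). apply mul_bot_l.
Qed.

Lemma mul_lex_of_lt_res a b c j :
  Lex b -> agree_below j (mul_omega mul b c) a -> strict le (c j) (res (a j) (b j)) ->
  lex (mul_omega mul b c) a.
Proof.
  intros Hb Hagree Hlt. apply mul_lex_at with j; [exact Hb|exact Hagree| |].
  - apply residuation, Hlt.
  - intros Hbj. exact (mul_ne_of_canc Hbj (mul_res_le (a j) (b j)) Hlt).
Qed.

Lemma lex_res_omega_of_mul_lex a b c r :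
  Lex c -> res_omega_spec a b r -> lex (mul_omega mul b c) a -> lex c r.
Proof.
  intros Hc Hr Hlex. apply lex_of_first_diff. intros m Hm Hne.
  destruct Hr as [-> _ Hexact|g Hrs Hbot _ Hg Hexact|d Hrs Htop _ Hexact _].
  - apply (le_res_of_mul_lex Hlex Hm). rewrite Hexact. now intros i _.
  - destruct (Nat.le_gt_cases m g) as [H|H].
    + rewrite Hrs by lia. apply (le_res_of_mul_lex Hlex Hm).
      now apply agree_below_le with g.
    + exfalso. apply Hne. rewrite Hbot by exact H.
      apply (proj1 (in_Lex_iff c) Hc g); [|exact H]. now rewrite Hm.
  - destruct (Nat.le_gt_cases m d) as [H|H].
    + rewrite Hrs by lia. apply (le_res_of_mul_lex Hlex Hm).
      now apply agree_below_le with d.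
    + assert (Htail : lex (fun i => c (i + S d)) top).
      { apply le_omega_lex, (proj2 top_Lex_greatest), Lex_shift, Hc. }
      replace m with (m - S d + S d) by lia. rewrite Htop.
      apply (lex_le_at_first_diff Htail).
      intros i Hi. rewrite <- Htop. apply Hm. lia.
Qed.

Lemma mul_lex_of_lex_res_omega a b c r :
  Lex b -> res_omega_spec a b r -> lex c r -> lex (mul_omega mul b c) a.
Proof.
  intros Hb Hr [<-|[j [Hj Hlt]]].
  - destruct Hr as [_ _ Hexact|g Hrs Hbot _ _ Hexact|d Hrs _ _ Hexact Hne].
    + now left.
    + apply lex_bot_after with g; [exact Hexact| |].
      * unfold mul_omega. rewrite Hrs by lia. apply mul_res_le.
      * intros i Hi. unfold mul_omega. rewrite Hbot by exact Hi. apply mul_bot_r.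
    + apply mul_lex_at with d; [exact Hb|exact Hexact| |now intros _].
      rewrite Hrs by lia. apply mul_res_le.
  - destruct Hr as [-> _ Hexact|g Hrs Hbot _ _ Hexact|d Hrs _ _ Hexact Hne].
    + apply mul_lex_of_lt_res with j; [exact Hb| |exact Hlt].
      apply (agree_below_mul_omega Hj). rewrite Hexact. now intros i _.
    + destruct (Nat.le_gt_cases j g) as [H|H].
      * rewrite Hrs in Hlt by lia. apply mul_lex_of_lt_res with j; [exact Hb| |exact Hlt].
        apply (agree_below_mul_omega Hj). now apply agree_below_le with g.
      * exfalso. rewrite Hbot in Hlt by exact H.
        apply (proj2 Hlt), le_antisymmetric; [apply Hlt|apply bot_least].
    + destruct (Nat.le_gt_cases j d) as [H|H].
      * rewrite Hrs in Hlt by lia. apply mul_lex_of_lt_res with j; [exact Hb| |exact Hlt].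
        apply (agree_below_mul_omega Hj). now apply agree_below_le with d.
      * apply mul_lex_at with d; [exact Hb| | |intros _; now rewrite (Hj d H)].
        -- apply (agree_below_mul_omega (r := r)); [|exact Hexact].
           apply agree_below_le with j; [lia|exact Hj].
        -- rewrite (Hj d H), Hrs by lia. apply mul_res_le.
Qed.

Theorem Lex_residuated_pomonoid :
  residuated_pomonoid_on Lex (le_omega le) (mul_omega mul) (res_omega le mul res bot)
    (one_omega one).
Proof.
  refine (conj _ (conj _ (conj _ (conj _ (conj _ (conj _ (conj _ (conj _ (conj _ _))))))))).
  - left. intros i. exact canc_one.
  - intros a b Ha Hb. exact (Lex_mul Ha Hb).
  - intros a b _ _. exact (Lex_of_res_omega_spec (res_omegaP a b)).
  - intros a _. apply le_omega_lex. now left.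
  - intros a b _ _ Hab Hba. apply lex_antisym; now apply le_omega_lex.
  - intros a b c _ _ _ Hab Hbc. apply le_omega_lex.
    apply lex_trans with b; now apply le_omega_lex.
  - intros a b c _ _ _. apply functional_extensionality. intros i. apply mul_assoc.
  - intros a b _ _. apply functional_extensionality. intros i. apply mul_comm.
  - intros a _. apply functional_extensionality. intros i. apply mul_1_l.
  - intros a b c _ Hb Hc. rewrite !le_omega_lex. split.
    + apply lex_res_omega_of_mul_lex, res_omegaP; exact Hc.
    + apply mul_lex_of_lex_res_omega, res_omegaP; exact Hb.
Qed.

End LexOmega.

Theorem proposition7 (A : Type) (le : A -> A -> Prop) (mul res : A -> A -> A)
  (one bot : A) :
  residuated_pomonoid le mul res one ->
  (forall x, le bot x) ->
  residuated_pomonoid_on (in_Lex mul bot) (le_omega le) (mul_omega mul)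
    (res_omega le mul res bot) (one_omega one).
Proof.
  intros (_ & _ & _ & Hrefl & Hanti & Htrans & Hassoc & Hcomm & Hone & Hres) Hbot.
  apply Lex_residuated_pomonoid; eauto.
Qed.
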